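(* Let $(X,Y,\phi)$ be an $L$-context and $X'\subseteq X$, $Y'\subseteq Y$. With $S_1,S_2\colon\mathcal{K}\phi\to\mathcal{K}\phi_{X',Y'}$ and $F_1,F_2\colon\mathcal{K}\phi_{X',Y'}\to\mathcal{K}\phi$ defined by $S_1\mu=(\phi_{X',Y'})^\forall(\phi_{X',Y'})^\exists\mu_{X'}$, $S_2\mu=\big((\phi_{X,Y'})^\forall(\phi_{X,Y'})^\exists\mu\big)_{X'}$, $F_1\mu'=\phi^\forall\phi^\exists\underline{\mu'}$, $F_2\mu'=(\phi_{X,Y'})^\forall(\phi_{X,Y'})^\exists\underline{\mu'}$, the following are equivalent: (i) $S_1$ is an isomorphism of complete $L$-lattices; (ii) $S_2$ is an isomorphism of complete $L$-lattices; (iii) $F_1$ is an isomorphism of complete $L$-lattices; (iv) $F_2$ is an isomorphism of complete $L$-lattices.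
   Context: $L=(L,* )$ is a complete residuated lattice: a complete lattice with bottom $0$ and top $1$, equipped with a commutative associative operation $*$ with unit $1$ satisfying $a*\bigvee_i b_i=\bigvee_i a*b_i$; $\to$ is its residuum ($a*b\le c\iff a\le b\to c$). An $L$-context is a triple $(X,Y,\phi)$ with $X,Y$ sets and $\phi\colon X\times Y\to L$. $L^X$ is the set of maps $X\to L$ with $L$-order $L^X(\mu,\mu')=\bigwedge_{x}(\mu(x)\to\mu'(x))$. $(\phi^\exists\mu)(y)=\bigvee_{x\in X}\mu(x)*\phi(x,y)$, $(\phi^\forall\lambda)(x)=\bigwedge_{y\in Y}(\phi(x,y)\to\lambda(y))$. $\mathcal{K}\phi=\{\mu\in L^X\mid\phi^\forall\phi^\exists\mu=\mu\}$, with the $L$-order inherited from $L^X$; it is a complete $L$-lattice. $\phi_{X',Y'}$ is the restriction of $\phi$ to $X'\times Y'$; $\mu_{X'}$ the restriction of $\mu$ to $X'$; $\underline{\mu'}\in L^X$ the extension of $\mu'\in L^{X'}$ by $0$. An isomorphism of complete $L$-lattices is a bijection $f$ that is $L$-isometric, i.e. $P(p,p')=Q(fp,fp')$ for all $p,p'$. *)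

From Stdlib Require Import ClassicalDescription.

Record CRL := {
  car :> Type;
  le : car -> car -> Prop;
  le_refl : forall a, le a a;
  le_antisym : forall a b, le a b -> le b a -> a = b;
  le_trans : forall a b c, le a b -> le b c -> le a c;
  sup : (car -> Prop) -> car;
  sup_ub : forall (S : car -> Prop) a, S a -> le a (sup S);
  sup_least : forall (S : car -> Prop) b, (forall a, S a -> le a b) -> le (sup S) b;
  one : car;
  one_top : forall a, le a one;
  mul : car -> car -> car;
  mul_assoc : forall a b c, mul a (mul b c) = mul (mul a b) c;
  mul_comm : forall a b, mul a b = mul b a;
  mul_one : forall a, mul a one = a;
  mul_sup : forall a (S : car -> Prop),
      mul a (sup S) = sup (fun c => exists b, S b /\ c = mul a b);
  res : car -> car -> car;
  residuation : forall a b c, le (mul a b) c <-> le a (res b c)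
}.

Arguments le {_}. Arguments sup {_}. Arguments one {_}.
Arguments mul {_}. Arguments res {_}.

Section Defs.
Variable L : CRL.

Definition inf (S : L -> Prop) : L := sup (fun a => forall b, S b -> le a b).
Definition bot : L := sup (fun _ => False).

Definition Lorder {A : Type} (mu mu' : A -> L) : L :=
  inf (fun a => exists x, a = res (mu x) (mu' x)).

Definition up {A B : Type} (phi : A -> B -> L) (mu : A -> L) : B -> L :=
  fun y => sup (fun a => exists x, a = mul (mu x) (phi x y)).
Definition down {A B : Type} (phi : A -> B -> L) (lam : B -> L) : A -> L :=
  fun x => inf (fun a => exists y, a = res (phi x y) (lam y)).
Definition closure {A B : Type} (phi : A -> B -> L) (mu : A -> L) : A -> L :=
  down phi (up phi mu).

(* membership in K phi = { mu in L^A | phi^forall phi^exists mu = mu } *)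
Definition inK {A B : Type} (phi : A -> B -> L) (mu : A -> L) : Prop :=
  closure phi mu = mu.

(* f is an isomorphism of complete L-lattices K phi -> K psi, where K phi and
   K psi carry the L-order inherited from L^A and L^C: f maps K phi into
   K psi, is a bijection between them, and is L-isometric. *)
Definition isIso {A B C D : Type} (phi : A -> B -> L) (psi : C -> D -> L)
    (f : (A -> L) -> (C -> L)) : Prop :=
  (forall mu, inK phi mu -> inK psi (f mu)) /\
  (forall mu nu, inK phi mu -> inK phi nu -> f mu = f nu -> mu = nu) /\
  (forall nu, inK psi nu -> exists mu, inK phi mu /\ f mu = nu) /\
  (forall mu nu, inK phi mu -> inK phi nu -> Lorder mu nu = Lorder (f mu) (f nu)).

Definition sub {X : Type} (X' : X -> Prop) : Type := {x : X | X' x}.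

Definition restr2 {X Y : Type} (phi : X -> Y -> L) (X' : X -> Prop) (Y' : Y -> Prop)
  : sub X' -> sub Y' -> L := fun x y => phi (proj1_sig x) (proj1_sig y).
Definition restrY {X Y : Type} (phi : X -> Y -> L) (Y' : Y -> Prop)
  : X -> sub Y' -> L := fun x y => phi x (proj1_sig y).

Definition restrict {X : Type} (X' : X -> Prop) (mu : X -> L) : sub X' -> L :=
  fun x => mu (proj1_sig x).
Definition extend0 {X : Type} (X' : X -> Prop) (mu' : sub X' -> L) : X -> L :=
  fun x => match excluded_middle_informative (X' x) with
           | left p => mu' (exist _ x p)
           | right _ => bot
           end.

Definition S1 {X Y : Type} (phi : X -> Y -> L) (X' : X -> Prop) (Y' : Y -> Prop)
  (mu : X -> L) : sub X' -> L := closure (restr2 phi X' Y') (restrict X' mu).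
Definition S2 {X Y : Type} (phi : X -> Y -> L) (X' : X -> Prop) (Y' : Y -> Prop)
  (mu : X -> L) : sub X' -> L := restrict X' (closure (restrY phi Y') mu).
Definition F1 {X Y : Type} (phi : X -> Y -> L) (X' : X -> Prop)
  (mu' : sub X' -> L) : X -> L := closure phi (extend0 X' mu').
Definition F2 {X Y : Type} (phi : X -> Y -> L) (X' : X -> Prop) (Y' : Y -> Prop)
  (mu' : sub X' -> L) : X -> L := closure (restrY phi Y') (extend0 X' mu').

End Defs.

(* S1 and S2 are left inverses of F1 on K phi', S2 is also a left inverse of F2,
   and all four maps preserve the L-order.  For a pair of L-order preserving maps
   with [f (g nu) = nu], both "f is an isomorphism" and "g is an isomorphism" are
   equivalent to "g is onto K phi".  Hence (i), (ii), (iii) all say that F1 is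
   onto K phi, while (ii) and (iv) both say that F2 is onto K phi. *)
From Stdlib Require Import FunctionalExtensionality ProofIrrelevance ClassicalDescription.

Section Residuated.
Variable L : CRL.

Lemma inf_lb (S : L -> Prop) b : S b -> le (inf L S) b.
Proof. intro Sb. apply sup_least. intros a Ha. exact (Ha b Sb). Qed.

Lemma inf_glb (S : L -> Prop) a : (forall b, S b -> le a b) -> le a (inf L S).
Proof. intro H. apply sup_ub. exact H. Qed.

Lemma bot_le (a : L) : le (bot L) a.
Proof. apply sup_least. intros b []. Qed.

Lemma mul_bot_le (a b : L) : le (mul a (bot L)) b.
Proof. unfold bot. rewrite mul_sup. apply sup_least. intros c [d [[] _]]. Qed.

Lemma mul_le_mono_r (a b c : L) : le a b -> le (mul a c) (mul b c).
Proof.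
  intro Hab. apply residuation. apply le_trans with b; [exact Hab|].
  apply residuation, le_refl.
Qed.

Lemma mul_le_mono_l (a b c : L) : le a b -> le (mul c a) (mul c b).
Proof. intro Hab. rewrite (mul_comm L c a), (mul_comm L c b). now apply mul_le_mono_r. Qed.

Lemma mul_one_l (a : L) : mul one a = a.
Proof. rewrite mul_comm. apply mul_one. Qed.

Lemma Lorder_mul_le {A : Type} (mu nu : A -> L) x :
  le (mul (Lorder L mu nu) (mu x)) (nu x).
Proof. apply residuation. apply inf_lb. now exists x. Qed.

Lemma Lorder_glb {A : Type} s (mu nu : A -> L) :
  (forall x, le (mul s (mu x)) (nu x)) -> le s (Lorder L mu nu).
Proof. intro H. apply inf_glb. intros b [x ->]. apply residuation, H. Qed.

Definition Lorder_preserving {A C : Type} (f : (A -> L) -> (C -> L)) : Prop :=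
  forall mu nu, le (Lorder L mu nu) (Lorder L (f mu) (f nu)).

Lemma Lorder_preserving_comp {A B C : Type}
    (f : (A -> L) -> (B -> L)) (g : (B -> L) -> (C -> L)) :
  Lorder_preserving f -> Lorder_preserving g ->
  Lorder_preserving (fun mu => g (f mu)).
Proof. intros Hf Hg mu nu. eapply le_trans; [apply Hf | apply Hg]. Qed.

Section ConceptOperators.
Variables (A B : Type) (phi : A -> B -> L).

Lemma up_mul_le s nu mu :
  (forall x, le (mul s (nu x)) (mu x)) ->
  forall y, le (mul s (up L phi nu y)) (up L phi mu y).
Proof.
  intros H y. unfold up at 1. rewrite mul_sup. apply sup_least.
  intros c [d [[x ->] ->]]. rewrite mul_assoc.
  apply le_trans with (mul (mu x) (phi x y)); [now apply mul_le_mono_r|].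
  apply sup_ub. now exists x.
Qed.

Lemma closure_mul_up_le mu x y :
  le (mul (closure L phi mu x) (phi x y)) (up L phi mu y).
Proof. apply residuation. apply inf_lb. now exists y. Qed.

Lemma closure_ext mu x : le (mu x) (closure L phi mu x).
Proof.
  apply inf_glb. intros b [y ->]. apply residuation.
  apply sup_ub. now exists x.
Qed.

Lemma closure_mul_le s nu mu :
  (forall x, le (mul s (nu x)) (mu x)) ->
  forall x, le (mul s (closure L phi nu x)) (closure L phi mu x).
Proof.
  intros H x. apply inf_glb. intros b [y ->]. apply (proj1 (residuation _ _ _ _)).
  rewrite <- mul_assoc.
  apply le_trans with (mul s (up L phi nu y)).
  - apply mul_le_mono_l, closure_mul_up_le.
  - now apply up_mul_le.
Qed.

Lemma closure_mono nu mu :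
  (forall x, le (nu x) (mu x)) -> forall x, le (closure L phi nu x) (closure L phi mu x).
Proof.
  intros H x. rewrite <- (mul_one_l (closure L phi nu x)).
  apply closure_mul_le. intro x'. now rewrite mul_one_l.
Qed.

Lemma up_closure mu : up L phi (closure L phi mu) = up L phi mu.
Proof.
  extensionality y. apply le_antisym.
  - apply sup_least. intros a [x ->]. apply closure_mul_up_le.
  - rewrite <- (mul_one_l (up L phi mu y)). apply up_mul_le.
    intro x. rewrite mul_one_l. apply closure_ext.
Qed.

Lemma closure_idem mu : closure L phi (closure L phi mu) = closure L phi mu.
Proof. unfold closure at 1. now rewrite up_closure. Qed.

Lemma closure_least nu mu :
  (forall x, le (nu x) (closure L phi mu x)) ->
  forall x, le (closure L phi nu x) (closure L phi mu x).
Proof. intros H x. rewrite <- (closure_idem mu). now apply closure_mono. Qed.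

Lemma Lorder_preserving_closure : Lorder_preserving (closure L phi).
Proof. intros mu nu. apply Lorder_glb, closure_mul_le, Lorder_mul_le. Qed.

End ConceptOperators.

Section Inverses.
Variables (A B C D : Type) (phi : A -> B -> L) (psi : C -> D -> L).
Variables (f : (A -> L) -> (C -> L)) (g : (C -> L) -> (A -> L)).
Hypothesis f_inK : forall mu, inK L phi mu -> inK L psi (f mu).
Hypothesis g_inK : forall nu, inK L psi nu -> inK L phi (g nu).
Hypothesis fgK : forall nu, inK L psi nu -> f (g nu) = nu.
Hypothesis f_Lorder : Lorder_preserving f.
Hypothesis g_Lorder : Lorder_preserving g.

Definition onto_K : Prop :=
  forall mu, inK L phi mu -> exists nu, inK L psi nu /\ g nu = mu.

Lemma onto_K_gfK : onto_K -> forall mu, inK L phi mu -> g (f mu) = mu.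
Proof. intros Hg mu Hmu. destruct (Hg mu Hmu) as [nu [Hnu <-]]. now rewrite fgK. Qed.

Lemma isIso_retraction : isIso L phi psi f <-> onto_K.
Proof.
  split.
  - intros [_ [f_inj _]] mu Hmu. exists (f mu). split; [now apply f_inK|].
    apply f_inj; auto.
  - intro Hg. pose proof (onto_K_gfK Hg) as gfK.
    split; [exact f_inK | split; [| split]].
    + intros mu nu Hmu Hnu Heq. now rewrite <- (gfK mu), <- (gfK nu), Heq.
    + intros nu Hnu. exists (g nu). auto.
    + intros mu nu Hmu Hnu. apply le_antisym; [apply f_Lorder|].
      rewrite <- (gfK mu Hmu) at 2. rewrite <- (gfK nu Hnu) at 2. apply g_Lorder.
Qed.

Lemma isIso_section : isIso L psi phi g <-> onto_K.
Proof.
  split.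
  - intros [_ [_ [g_onto _]]]. exact g_onto.
  - intro Hg. split; [exact g_inK | split; [| split; [exact Hg |]]].
    + intros mu nu Hmu Hnu Heq. now rewrite <- (fgK mu), <- (fgK nu), Heq.
    + intros mu nu Hmu Hnu. apply le_antisym; [apply g_Lorder|].
      rewrite <- (fgK mu Hmu) at 2. rewrite <- (fgK nu Hnu) at 2. apply f_Lorder.
Qed.

End Inverses.
End Residuated.

Section Subcontext.
Variables (L : CRL) (X Y : Type) (phi : X -> Y -> L) (X' : X -> Prop) (Y' : Y -> Prop).
Local Notation phi' := (restr2 L phi X' Y').
Local Notation phiY := (restrY L phi Y').
Local Notation R := (restrict L X').
Local Notation E := (extend0 L X').

Lemma restrict_extend0 nu : R (E nu) = nu.
Proof.
  extensionality x'. destruct x' as [x p]. unfold restrict, extend0; simpl.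
  destruct (excluded_middle_informative (X' x)) as [q|q]; [|contradiction].
  now rewrite (proof_irrelevance _ q p).
Qed.

Lemma extend0_restrict_le mu x : le (E (R mu) x) (mu x).
Proof.
  unfold extend0, restrict.
  destruct (excluded_middle_informative (X' x)); [apply le_refl | apply bot_le].
Qed.

Lemma Lorder_preserving_restrict : Lorder_preserving L R.
Proof. intros mu nu. apply Lorder_glb. intro x'. apply Lorder_mul_le. Qed.

Lemma Lorder_preserving_extend0 : Lorder_preserving L E.
Proof.
  intros mu nu. apply Lorder_glb. intro x. unfold extend0.
  destruct (excluded_middle_informative (X' x)); [apply Lorder_mul_le | apply mul_bot_le].
Qed.

Lemma up_restr2 nu : up L phi' nu = up L phiY (E nu).
Proof.
  extensionality y. apply le_antisym; apply sup_least.
  - intros a [x' ->]. apply sup_ub. exists (proj1_sig x').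
    pose proof (f_equal (fun m => m x') (restrict_extend0 nu)) as Hx.
    now rewrite <- Hx.
  - intros a [x ->]. unfold extend0.
    destruct (excluded_middle_informative (X' x)) as [p|p].
    + apply sup_ub. now exists (exist _ x p).
    + rewrite mul_comm. apply mul_bot_le.
Qed.

Lemma closure_restr2 nu : closure L phi' nu = R (closure L phiY (E nu)).
Proof. unfold closure at 1. now rewrite up_restr2. Qed.

Lemma closure_le_restrY mu x : le (closure L phi mu x) (closure L phiY mu x).
Proof.
  apply inf_glb. intros b [y' ->]. apply inf_lb. now exists (proj1_sig y').
Qed.

Lemma closure_restrY_closure mu : closure L phiY (closure L phi mu) = closure L phiY mu.
Proof.
  extensionality x. apply le_antisym.
  - apply closure_least, closure_le_restrY.
  - apply closure_mono, closure_ext.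
Qed.

Lemma closure_closure_restrY mu : closure L phi (closure L phiY mu) = closure L phiY mu.
Proof.
  extensionality x. apply le_antisym; [| apply closure_ext].
  apply le_trans with (closure L phiY (closure L phiY mu) x).
  - apply closure_le_restrY.
  - rewrite closure_idem. apply le_refl.
Qed.

Lemma S1_inK mu : inK L phi' (S1 L phi X' Y' mu).
Proof. apply closure_idem. Qed.

Lemma S2_inK mu : inK L phi' (S2 L phi X' Y' mu).
Proof.
  unfold inK, S2. rewrite closure_restr2. extensionality x'. apply le_antisym.
  - apply closure_least, extend0_restrict_le.
  - pose proof (f_equal (fun m => m x') (restrict_extend0 (R (closure L phiY mu)))) as Hx.
    cbv beta in Hx.
    apply le_trans with (R (E (R (closure L phiY mu))) x');
      [rewrite Hx; apply le_refl | apply (closure_ext L _ _ phiY)].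
Qed.

Lemma F1_inK nu : inK L phi (F1 L phi X' nu).
Proof. apply closure_idem. Qed.

Lemma F2_inK nu : inK L phi (F2 L phi X' Y' nu).
Proof. apply closure_closure_restrY. Qed.

Lemma Lorder_preserving_S1 : Lorder_preserving L (S1 L phi X' Y').
Proof.
  apply (Lorder_preserving_comp L R (closure L phi'));
    [apply Lorder_preserving_restrict | apply Lorder_preserving_closure].
Qed.

Lemma Lorder_preserving_S2 : Lorder_preserving L (S2 L phi X' Y').
Proof.
  apply (Lorder_preserving_comp L (closure L phiY) R);
    [apply Lorder_preserving_closure | apply Lorder_preserving_restrict].
Qed.

Lemma Lorder_preserving_F1 : Lorder_preserving L (F1 L phi X').
Proof.
  apply (Lorder_preserving_comp L E (closure L phi));
    [apply Lorder_preserving_extend0 | apply Lorder_preserving_closure].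
Qed.

Lemma Lorder_preserving_F2 : Lorder_preserving L (F2 L phi X' Y').
Proof.
  apply (Lorder_preserving_comp L E (closure L phiY));
    [apply Lorder_preserving_extend0 | apply Lorder_preserving_closure].
Qed.

Section Extent.
Variable nu : sub X' -> L.
Hypothesis nu_inK : inK L phi' nu.

Lemma restrict_closure_restrY_extend0 : R (closure L phiY (E nu)) = nu.
Proof. rewrite <- closure_restr2. exact nu_inK. Qed.

Lemma S2_F2K : S2 L phi X' Y' (F2 L phi X' Y' nu) = nu.
Proof. unfold S2, F2. rewrite closure_idem. apply restrict_closure_restrY_extend0. Qed.

Lemma S2_F1K : S2 L phi X' Y' (F1 L phi X' nu) = nu.
Proof.
  unfold S2, F1. rewrite closure_restrY_closure.
  apply restrict_closure_restrY_extend0.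
Qed.

Lemma S1_F1K : S1 L phi X' Y' (F1 L phi X' nu) = nu.
Proof.
  assert (restrict_F1 : R (closure L phi (E nu)) = nu).
  { extensionality x'. apply le_antisym.
    - apply le_trans with (R (closure L phiY (E nu)) x');
        [exact (closure_le_restrY _ _) | rewrite restrict_closure_restrY_extend0; apply le_refl].
    - apply le_trans with (R (E nu) x');
        [rewrite restrict_extend0; apply le_refl | exact (closure_ext L _ _ phi _ _)]. }
  unfold S1, F1. rewrite restrict_F1. exact nu_inK.
Qed.

End Extent.

Local Notation onto_K_of := (onto_K L X Y (sub X') (sub Y') phi phi').

Lemma isIso_S1_iff : isIso L phi phi' (S1 L phi X' Y') <-> onto_K_of (F1 L phi X').
Proof.
  apply isIso_retraction; auto using S1_inK, F1_inK, S1_F1K,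
    Lorder_preserving_S1, Lorder_preserving_F1.
Qed.

Lemma isIso_F1_iff : isIso L phi' phi (F1 L phi X') <-> onto_K_of (F1 L phi X').
Proof.
  apply (isIso_section _ _ _ _ _ _ _ (S1 L phi X' Y'));
    auto using S1_inK, F1_inK, S1_F1K, Lorder_preserving_S1, Lorder_preserving_F1.
Qed.

Lemma isIso_S2_iff_F1 : isIso L phi phi' (S2 L phi X' Y') <-> onto_K_of (F1 L phi X').
Proof.
  apply isIso_retraction; auto using S2_inK, F1_inK, S2_F1K,
    Lorder_preserving_S2, Lorder_preserving_F1.
Qed.

Lemma isIso_S2_iff_F2 : isIso L phi phi' (S2 L phi X' Y') <-> onto_K_of (F2 L phi X' Y').
Proof.
  apply isIso_retraction; auto using S2_inK, F2_inK, S2_F2K,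
    Lorder_preserving_S2, Lorder_preserving_F2.
Qed.

Lemma isIso_F2_iff : isIso L phi' phi (F2 L phi X' Y') <-> onto_K_of (F2 L phi X' Y').
Proof.
  apply (isIso_section _ _ _ _ _ _ _ (S2 L phi X' Y'));
    auto using S2_inK, F2_inK, S2_F2K, Lorder_preserving_S2, Lorder_preserving_F2.
Qed.

End Subcontext.

Theorem mainTheorem3 (L : CRL) (X Y : Type) (phi : X -> Y -> L)
    (X' : X -> Prop) (Y' : Y -> Prop) :
  let phi' := restr2 L phi X' Y' in
  (isIso L phi phi' (S1 L phi X' Y') <-> isIso L phi phi' (S2 L phi X' Y')) /\
  (isIso L phi phi' (S2 L phi X' Y') <-> isIso L phi' phi (F1 L phi X')) /\
  (isIso L phi' phi (F1 L phi X') <-> isIso L phi' phi (F2 L phi X' Y')).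
Proof.
  intro phi'.
  pose proof (isIso_S1_iff L X Y phi X' Y').
  pose proof (isIso_F1_iff L X Y phi X' Y').
  pose proof (isIso_S2_iff_F1 L X Y phi X' Y').
  pose proof (isIso_S2_iff_F2 L X Y phi X' Y').
  pose proof (isIso_F2_iff L X Y phi X' Y').
  tauto.
Qed.
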